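(* Let $d\in\mathbb N$, $D=[-\frac12,\frac12]^d$ and $\Phi:\mathbb R^d\to[0,\infty)$. Assume there exists $x_\star$ in the interior of $D$ such that for every $r>0$, $\inf_{x\in D,\|x-x_\star\|>r}\Phi(x)-\Phi(x_\star)>0$; $\Phi$ is $(4d+3)$ times continuously differentiable in a neighborhood of $x_\star$ with $H_\star=\nabla^2\Phi(x_\star)$ positive definite; and $\Phi$ is $d$ times continuously differentiable on $\mathbb R^d$. Write $H_\star=QDQ^\top$ with $Q$ orthogonal and $D=\mathrm{diag}(\lambda_1,\dots,\lambda_d)$, $\lambda_i>0$. Fix $\tau\in(0,1)$ and set $g_n(x)=x_\star+\sqrt{2|\ln\tau|/n}\,QD^{-1/2}x$ and $\Theta_n(x)=\exp(-n\Phi(x))$. Then, with the norm $\|\cdot\|_\gamma$ defined below (for any positive POD weights $\gamma$), $\|\Theta_n\circ g_n\|_\gamma\in\mathcal O(1)$ as $n\to\infty$.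
   Context: POD weights: $\gamma_\nu=\alpha_{|\nu|}\prod_{j\in\nu}\beta_j$ for $\nu\subseteq\{1,\dots,d\}$ with $\alpha_0=\alpha_1=1$, $\alpha_2,\ldots>0$, $\beta_1\ge\beta_2\ge\dots>0$. For $F:[-\frac12,\frac12]^d\to\mathbb R$ with continuous mixed first-order derivatives, $$\|F\|_\gamma^2=\sum_{\nu\subseteq\{1,\dots,d\}}\frac1{\gamma_\nu}\int_{[-\frac12,\frac12]^{|\nu|}}\Big(\int_{[-\frac12,\frac12]^{d-|\nu|}}\frac{\partial^{|\nu|}F}{\partial x_\nu}(x)\,dx_{\{1,\dots,d\}\setminus\nu}\Big)^2dx_\nu.$$ *)

From HB Require Import structures.
From mathcomp Require Import all_boot all_order all_algebra.
From mathcomp Require Import all_classical all_reals all_analysis.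
Set Implicit Arguments. Unset Strict Implicit. Unset Printing Implicit Defensive.
Import Order.TTheory GRing.Theory Num.Theory numFieldNormedType.Exports.
Local Open Scope classical_set_scope.
Local Open Scope ring_scope.

Section Defs.
Variables (R : realType) (d : nat).
Implicit Types (f : 'rV[R]_d -> R) (x : 'rV[R]_d).

Definition ev (j : 'I_d) : 'rV[R]_d := \row_k (if k == j then 1 else 0).

Definition partial (j : 'I_d) f : 'rV[R]_d -> R := fun x => 'D_(ev j) f x.

Definition iter_partial (s : seq 'I_d) f : 'rV[R]_d -> R :=
  foldr (fun j g => partial j g) f s.

Definition Ck (k : nat) (U : set 'rV[R]_d) f : Prop :=
  forall s : seq 'I_d, forall x, U x ->
    ((size s < k)%N -> forall j, derivable (iter_partial s f) x (ev j)) /\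
    ((size s <= k)%N -> {for x, continuous (iter_partial s f)}).

Definition enorm x : R := Num.sqrt (\sum_(i < d) (x 0 i) ^+ 2).

Definition upd x (j : 'I_d) (t : R) : 'rV[R]_d :=
  \row_k (if k == j then t else x 0 k).

Fixpoint cint (s : seq 'I_d) f x : R :=
  match s with
  | [::] => f x
  | j :: s' => Rintegral (@lebesgue_measure R) `[(- (1/2))%R, (1/2)%R]%classic
                 (fun t => cint s' f (upd x j t))
  end.

Definition pod_weights (alpha : nat -> R) (beta : 'I_d -> R) : Prop :=
  alpha 0%N = 1 /\ alpha 1%N = 1 /\ (forall k, 0 < alpha k) /\
  (forall j, 0 < beta j) /\ (forall i j : 'I_d, (i <= j)%N -> beta j <= beta i).

Definition gammaw (alpha : nat -> R) (beta : 'I_d -> R) (nu : {set 'I_d}) : R :=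
  alpha #|nu| * \prod_(j in nu) beta j.

Definition gamma_norm (alpha : nat -> R) (beta : 'I_d -> R) f : R :=
  Num.sqrt (\sum_(nu : {set 'I_d})
     (gammaw alpha beta nu)^-1 *
       cint (enum nu)
         (fun y => (cint (enum (~: nu)) (iter_partial (enum nu) f) y) ^+ 2) 0).

Definition hessian f x : 'M[R]_d := \matrix_(i, j) iter_partial [:: i; j] f x.

End Defs.

From HB Require Import structures.
From mathcomp Require Import all_boot all_order all_algebra.
From mathcomp Require Import all_classical all_reals all_analysis.
From mathcomp Require Import ring lra measurable_realfun.
Import Order.TTheory GRing.Theory Num.Theory numFieldNormedType.Exports.
Local Open Scope classical_set_scope.
Local Open Scope ring_scope.
Set Implicit Arguments. Unset Strict Implicit. Unset Printing Implicit Defensive.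

(* Only the behaviour of Phi near x* matters: with h_n = sqrt (2 |ln tau| / n), the map g_n
   sends the unit box into a ball of radius O(h_n) around x*.  Every partial derivative of
   Theta_n o g_n is exp (- n Phi o g_n) <= 1 times a polynomial in the quantities
   n h_n^|s| (d_s Phi)(g_n x).  For |s| >= 2 these are O(n h_n^2) = O(1) by continuity of
   d_s Phi at x*; for |s| = 1 the gradient vanishes at the interior minimiser x*, so
   d_i Phi (g_n x) = O(h_n) and n h_n d_i Phi (g_n x) = O(1).  The integrals defining the
   norm are over sets of measure one, so they inherit these bounds. *)

Section matrix_norm.
Variable R : realType.

Lemma mx_norm_ge_entry m n (M : 'M[R]_(m, n)) i j : `|M i j| <= `|M|.
Proof.
change `|M| with (mx_norm M); rewrite mx_normrE.
exact: (le_bigmax_cond _ (fun ij => `|M ij.1 ij.2|) (isT : predT (i, j))).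
Qed.

Lemma mx_norm_le_entries m n (M : 'M[R]_(m, n)) r :
  0 <= r -> (forall i j, `|M i j| <= r) -> `|M| <= r.
Proof.
move=> r0 HM; change `|M| with (mx_norm M); rewrite mx_normrE.
by apply: bigmax_le => // -[i j] _; apply: HM.
Qed.

Lemma mx_norm_mulmx_le d (x : 'rV[R]_d) (A : 'M[R]_d) :
  `|x *m A| <= d%:R * (`|x| * `|A|).
Proof.
apply: mx_norm_le_entries => [|i j]; first by rewrite !mulr_ge0.
rewrite mxE (le_trans (ler_norm_sum _ _ _)) //.
apply: (le_trans (y := \sum_(k < d) `|x| * `|A|)).
  by apply: ler_sum => k _; rewrite normrM ler_pM ?mx_norm_ge_entry.
by rewrite sumr_const card_ord mulr_natl.
Qed.

Lemma mx_norm_scale_ev d (t : R) (i : 'I_d) : `|t *: ev R i| <= `|t|.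
Proof.
apply: mx_norm_le_entries => // j k; rewrite !mxE.
by case: eqP => _; rewrite ?mulr1 ?mulr0 ?normr0.
Qed.

Lemma mx_ball0 m n (r : R) (x : 'M[R]_(m, n)) : ball 0 r x -> `|x| < r.
Proof. by rewrite mx_norm_ball /ball_ /= sub0r normrN. Qed.

Lemma open_mx_ball d (U : set 'rV[R]_d) x :
  open U -> U x -> exists2 r : R, 0 < r & forall y, `|y - x| < r -> U y.
Proof.
move=> oU /oU /nbhs_ballP [r r0 Ur]; exists r => // y yx; apply: Ur.
by rewrite mx_norm_ball /ball_ /= distrC.
Qed.

Lemma ev_mulmx d j (M : 'M[R]_d) l : (ev R j *m M) 0 l = M j l.
Proof.
rewrite mxE (bigD1 j) //= big1 => [|i ij]; rewrite !mxE ?eqxx ?mul1r ?addr0 //.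
by rewrite (negbTE ij) mul0r.
Qed.

End matrix_norm.

Section line_restriction.
Variables (R : realType) (V W : normedModType R) (f : V -> W) (a w : V).

Let quotient_along_line t :
  (fun h : R => h^-1 *: ((f \o shift (t *: w + a)) (h *: w) - f (t *: w + a))) =
  (fun h : R => h^-1 *: (((fun s : R => f (s *: w + a)) \o shift t) (h *: 1) -
                          f (t *: w + a))).
Proof.
by apply: funext => h /=; rewrite [h *: 1]mulr1 scalerDl addrA.
Qed.

Lemma derive_along_line t :
  'D_w f (t *: w + a) = 'D_1 (fun s : R => f (s *: w + a)) t.
Proof. by rewrite /derive quotient_along_line. Qed.

Lemma derivable_along_line t :
  derivable f (t *: w + a) w <-> derivable (fun s : R => f (s *: w + a)) t 1.
Proof. by rewrite /derivable quotient_along_line. Qed.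

Lemma is_derive_along_line t (D : W) :
  is_derive (t *: w + a) w f D -> is_derive t 1 (fun s : R => f (s *: w + a)) D.
Proof.
move=> [/derivable_along_line df <-].
by apply: DeriveDef => //; rewrite derive_along_line.
Qed.

End line_restriction.

Lemma MVT_from0 (R : realType) (phi D : R -> R) (b : R) :
  (forall s : R, `|s| <= `|b| -> is_derive s 1 phi (D s)) ->
  exists2 c, `|c| <= `|b| & phi b - phi 0 = D c * b.
Proof.
move=> dphi.
have MVT_in a c : a <= c -> (forall s, a <= s <= c -> `|s| <= `|b|) ->
    exists2 e, a <= e <= c & phi c - phi a = D e * (c - a).
  move=> ac sub.
  have dphi_in s : s \in `]a, c[ -> is_derive s 1 phi (D s).
    by rewrite in_itv /= => /andP[/ltW ? /ltW ?]; apply/dphi/sub/andP.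
  have cphi : {within `[a, c], continuous phi}.
    apply: derivable_within_continuous => s /[!in_itv] /= sac.
    by have [] := dphi s (sub s sac).
  by have [e] := MVT_segment ac dphi_in cphi; rewrite in_itv /=; exists e.
have [b0|b0] := leP 0 b.
  have [|e /andP[e0 eb] ->] := MVT_in 0 b b0.
    by move=> s /andP[s0 sb]; rewrite !ger0_norm.
  by exists e; rewrite ?subr0 // !ger0_norm.
have [|e /andP[be e0] He] := MVT_in b 0 (ltW b0).
  by move=> s /andP[bs s0]; rewrite !ler0_norm ?lerN2 // ltW.
exists e; first by rewrite !ler0_norm ?lerN2 // ltW.
by apply: oppr_inj; rewrite opprB He; ring.
Qed.

Lemma MVT_line (R : realType) (V : normedModType R) (f : V -> R) (a w : V)
    (b : R) (D : R -> R) :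
  (forall s, `|s| <= `|b| -> is_derive (s *: w + a) w f (D s)) ->
  exists2 c, `|c| <= `|b| & f (b *: w + a) - f a = D c * b.
Proof.
move=> df; have [c cb Hc] := @MVT_from0 R _ D b (fun s sb => is_derive_along_line (df s sb)).
by exists c; rewrite // -Hc scale0r add0r.
Qed.

Lemma is_derive_expR_comp (R : realType) (V : normedModType R) (g : V -> R) x v :
  derivable g x v -> is_derive x v (fun y => expR (g y)) (expR (g x) * 'D_v g x).
Proof.
rewrite -[x in derivable g x]add0r -(scale0r v) derivable_along_line => dg.
have dexp : derivable expR (g (0 *: v + x)) 1 by [].
apply: DeriveDef.
  rewrite -[x]add0r -(scale0r v) derivable_along_line.
  by apply/derivable1_diffP/differentiable_comp; apply/derivable1_diffP.
rewrite -[x in LHS]add0r -(scale0r v) derive_along_line.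
have := derive1_comp dg dexp; rewrite !derive1E /= => ->.
by rewrite derive_val -derive_along_line scale0r add0r.
Qed.

Section affine_change.
Variables (R : realType) (d : nat) (W : normedModType R) (f : 'rV[R]_d -> W).
Variables (p : 'rV[R]_d) (c : R) (M : 'M[R]_d).

Let quotient_affine x v :
  (fun h : R => h^-1 *: (((fun y => f (p + c *: (y *m M))) \o shift x) (h *: v) -
     f (p + c *: (x *m M)))) =
  (fun h : R => h^-1 *: ((f \o shift (p + c *: (x *m M))) (h *: (c *: (v *m M))) -
     f (p + c *: (x *m M)))).
Proof.
apply: funext => h /=; congr (_ *: (f _ - _)).
by rewrite mulmxDl -scalemxAl scalerDr !scalerA [c * h]mulrC addrCA addrC.
Qed.

Lemma derive_affine x v :
  'D_v (fun y => f (p + c *: (y *m M))) x = 'D_(c *: (v *m M)) f (p + c *: (x *m M)).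
Proof. by rewrite /derive quotient_affine. Qed.

Lemma derivable_affine x v :
  derivable (fun y => f (p + c *: (y *m M))) x v <->
  derivable f (p + c *: (x *m M)) (c *: (v *m M)).
Proof. by rewrite /derivable quotient_affine. Qed.

End affine_change.

Section continuous_partials.
Variables (R : realType) (d : nat).
Implicit Types (f : 'rV[R]_d -> R) (v y : 'rV[R]_d).

Definition row_take k v : 'rV[R]_d := \row_i (if (i < k)%N then v 0 i else 0).

Lemma row_take0 v : row_take 0 v = 0.
Proof. by apply/rowP => i; rewrite !mxE. Qed.

Lemma row_take_all v : row_take d v = v.
Proof. by apply/rowP => i; rewrite !mxE ltn_ord. Qed.

Lemma row_takeS v (k : 'I_d) :
  row_take k.+1 v = v 0 k *: ev R k + row_take k v.
Proof.
apply/rowP => i; rewrite !mxE ltnS leq_eqVlt.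
have [->|ik] := eqVneq i k; first by rewrite eqxx ltnn /=; ring.
have ik' : (i == k :> nat) = false by apply/negbTE.
by rewrite ik' /=; ring.
Qed.

Lemma mx_norm_scale_row_take (t s : R) v (k : 'I_d) :
  `|s| <= `|t * v 0 k| -> `|s *: ev R k + t *: row_take k v| <= `|t| * `|v|.
Proof.
move=> sk; apply: mx_norm_le_entries => [|i j]; first by rewrite mulr_ge0.
rewrite ord1 !mxE; have [->|ik] := eqVneq j k.
  rewrite ?eqxx ltnn mulr0 addr0 mulr1 (le_trans sk) // normrM.
  by rewrite ler_pM ?mx_norm_ge_entry.
rewrite mulr0 add0r normrM; case: ifP => _.
  by rewrite ler_pM ?mx_norm_ge_entry.
by rewrite normr0 mulr0 mulr_ge0.
Qed.

Lemma increment_by_partials f y v (t : R) :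
  (forall z, `|z - y| <= `|t| * `|v| -> forall i, derivable f z (ev R i)) ->
  exists2 xi : 'I_d -> 'rV[R]_d, (forall k, `|xi k - y| <= `|t| * `|v|) &
    f (t *: v + y) - f y = \sum_k t * v 0 k * partial k f (xi k).
Proof.
move=> df; pose z k := t *: row_take k v + y.
have step (k : 'I_d) : exists x, `|x - y| <= `|t| * `|v| /\
    f (z k.+1) - f (z k) = t * v 0 k * partial k f x.
  pose near_y s := s *: ev R k + z k.
  have near_yP s : `|s| <= `|t * v 0 k| -> `|near_y s - y| <= `|t| * `|v|.
    by move=> sk; rewrite /near_y /z addrA addrK mx_norm_scale_row_take.
  have [|c ck Hc] := @MVT_line R _ f (z k) (ev R k) (t * v 0 k) (fun s => partial k f (near_y s)).
    by move=> s sk; apply/derivableP/df/near_yP.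
  exists (near_y c); split; first exact: near_yP.
  by rewrite -mulrC -Hc /z row_takeS scalerDr scalerA addrA.
have [xi Hxi] := choice step.
exists xi => [k|]; first by have [] := Hxi k.
have -> : f (t *: v + y) - f y = f (z d) - f (z 0%N).
  by rewrite /z row_take_all row_take0 scaler0 add0r.
rewrite -(telescope_sumr (fun k => f (z k))) // big_mkord.
by apply: eq_bigr => k _; have [] := Hxi k.
Qed.

Lemma partials_near_ball f y (e : R) : 0 < e ->
  (\forall z \near y, forall i, derivable f z (ev R i)) ->
  (forall i, {for y, continuous (partial i f)}) ->
  exists2 del : R, 0 < del & forall z, `|z - y| < del ->
    (forall i, derivable f z (ev R i)) /\ (forall i, `|partial i f y - partial i f z| <= e).
Proof.
move=> e0 df cf.
have near_cont : \forall z \near y, forall i, `|partial i f y - partial i f z| <= e.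
  apply: (@filter_forall _ 'I_d (fun i z => `|partial i f y - partial i f z| <= e)
    (nbhs y) _) => i.
  by move: (cf i) => /(@cvgrPdist_le _ _ _ _ (nbhs_filter y)) /(_ e e0).
have /(nbhs_ballP _ _).1 [del del0 Hdel] : \forall z \near y,
    (forall i, derivable f z (ev R i)) /\ (forall i, `|partial i f y - partial i f z| <= e).
  by apply: filterS2 df near_cont => z ? ?; split.
exists del => // z zy; apply: Hdel.
by rewrite mx_norm_ball /ball_ /= distrC.
Qed.

Lemma is_derive_partials f y :
  (\forall z \near y, forall i, derivable f z (ev R i)) ->
  (forall i, {for y, continuous (partial i f)}) ->
  forall v, is_derive y v f (\sum_i v 0 i * partial i f y).
Proof.
move=> df cf v; set l := \sum_i _.
suff cv : (fun h : R => h^-1 *: ((f \o shift y) (h *: v) - f y)) @ 0^' --> l.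
  by apply: DeriveDef; [apply/cvg_ex; exists l | exact: cvg_lim].
apply/cvgrPdist_le => e e0.
pose e' := e / (d%:R * `|v| + 1).
have e'0 : 0 < e' by rewrite divr_gt0 // ltr_wpDl // mulr_ge0.
have [del del0 Hdel] := partials_near_ball e'0 df cf.
have v1 : 0 < `|v| + 1 by rewrite ltr_wpDl.
near=> t.
have t0 : t != 0 by near: t; exact: nbhs_dnbhs_neq.
have tv : `|t| * `|v| < del.
  have : `|t| < del / (`|v| + 1) by near: t; apply: dnbhs0_lt; rewrite divr_gt0.
  rewrite ltr_pdivlMr // => /(le_lt_trans _); apply.
  by rewrite ler_pM // lerDl.
have [xi xiy ->] := increment_by_partials (fun z zy => (Hdel z (le_lt_trans zy tv)).1).
rewrite /l scaler_sumr -sumrB (le_trans (ler_norm_sum _ _ _)) //.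
apply: (le_trans (y := \sum_(k < d) `|v| * e')).
  apply: ler_sum => k _.
  have -> : t^-1 *: (t * v 0 k * partial k f (xi k)) = v 0 k * partial k f (xi k).
    by rewrite /GRing.scale /=; field.
  rewrite -mulrBr normrM ler_pM ?mx_norm_ge_entry //.
  exact: (Hdel _ (le_lt_trans (xiy k) tv)).2.
rewrite sumr_const card_ord -mulr_natl /e' mulrA mulrA.
by rewrite ler_pdivrMr ?ltr_wpDl ?mulr_ge0 // mulrDr mulr1 [e * _]mulrC lerDl ltW.
Unshelve. all: by end_near.
Qed.

End continuous_partials.

Section interior_minimum.
Variables (R : realType) (d : nat).

Lemma partial_eq0_at_min (f : 'rV[R]_d -> R) x i (r : R) : 0 < r ->
  (forall t, `|t| < r ->
    f x <= f (t *: ev R i + x) /\ derivable f (t *: ev R i + x) (ev R i)) ->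
  partial i f x = 0.
Proof.
move=> r0 fr; rewrite /partial -[x in 'D__ _ x]add0r -(scale0r (ev R i)).
rewrite derive_along_line.
have /@derive_val -> // : is_derive (0 : R) 1 (fun t => f (t *: ev R i + x)) 0.
apply: (derive1_at_min (a := - r) (b := r)).
- by move: r0 => /ltW r0; lra.
- move=> t /[!in_itv] /= /andP[t1 t2]; apply/derivable_along_line.
  by apply: (fr t _).2; rewrite ltr_norml t1 t2.
- by rewrite in_itv /= oppr_lt0 r0.
- move=> t /[!in_itv] /= /andP[t1 t2]; rewrite scale0r add0r.
  by apply: (fr t _).1; rewrite ltr_norml t1 t2.
Qed.

Lemma enorm_scale_ev (t : R) (i : 'I_d) : enorm (t *: ev R i) = `|t|.
Proof.
rewrite /enorm (bigD1 i) //= big1 => [|j ji]; last by rewrite !mxE (negbTE ji) mulr0 expr0n.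
by rewrite !mxE eqxx mulr1 addr0 sqrtr_sqr.
Qed.

Lemma partial_eq0_at_isolated_min (Phi : 'rV[R]_d -> R) xs (U : set 'rV[R]_d) k :
  (0 < k)%N -> open U -> U xs -> Ck k U Phi ->
  (forall i, - (1/2) < xs 0 i < 1/2) ->
  (forall r : R, 0 < r -> exists c : R, 0 < c /\
     forall x : 'rV[R]_d, (forall i, - (1/2) <= x 0 i <= 1/2) ->
       r < enorm (x - xs) -> c <= Phi x - Phi xs) ->
  forall i, partial i Phi xs = 0.
Proof.
move=> k0 oU Uxs CkU xs_in Phi_min i.
have [rU rU0 UrU] := open_mx_ball oU Uxs.
have [xl xu] := andP (xs_in i).
pose r := Order.min rU (Order.min (1/2 - xs 0 i) (xs 0 i + 1/2)).
have r0 : 0 < r by rewrite !lt_min rU0 subr_gt0 xu /=; lra.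
apply: (partial_eq0_at_min (r := r)) => // t tr.
have [tU tm] : `|t| < rU /\ `|t| < Order.min (1/2 - xs 0 i) (xs 0 i + 1/2).
  by move: tr; rewrite lt_min => /andP[].
split; last first.
  apply: ((CkU [::] _ (UrU _ _)).1 k0); rewrite addrK.
  exact: le_lt_trans (mx_norm_scale_ev _ _) tU.
have [->|t0] := eqVneq t 0; first by rewrite scale0r add0r.
have t2 : 0 < `|t| / 2 by rewrite divr_gt0 ?normr_gt0.
have [c [c0 Hc]] := Phi_min _ t2.
rewrite -subr_ge0 (le_trans (ltW c0)) //; apply: Hc.
- move=> j; rewrite !mxE; have [->|_] := eqVneq j i.
    move: tm; rewrite lt_min mulr1 => /andP[]; rewrite !ltr_norml.
    by move=> /andP[? ?] /andP[? ?]; apply/andP; split; lra.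
  by rewrite mulr0 add0r; have /andP[? ?] := xs_in j; apply/andP; split; apply: ltW.
- by rewrite addrK enorm_scale_ev ltr_pdivrMr // ltr_pMr ?normr_gt0 // ltr1n.
Qed.

End interior_minimum.

Section tail_bounds.
Variables (R : realType) (d : nat).
Implicit Types (S : set 'rV[R]_d) (u v : nat -> 'rV[R]_d -> R).

Definition tail_bounded S u :=
  exists C N, forall n, (N <= n)%N -> forall x, S x -> `|u n x| <= C.

Definition tail_eq S u v :=
  exists N, forall n, (N <= n)%N -> forall x, S x -> u n x = v n x.

Definition tail_derivable S u :=
  exists N, forall n, (N <= n)%N -> forall x, S x -> forall j, derivable (u n) x (ev R j).

Fixpoint tail_bounded_partials S m u :=
  match m with
  | 0 => tail_bounded S u
  | m.+1 => [/\ tail_bounded S u, tail_derivable S u &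
                forall j, tail_bounded_partials S m (fun n => partial j (u n))]
  end.

Lemma tail_bounded_sub S S' u : S `<=` S' -> tail_bounded S' u -> tail_bounded S u.
Proof. by move=> SS' [C [N uC]]; exists C, N => n Nn x /SS'; apply: uC. Qed.

Lemma tail_bounded_eq S u v : tail_eq S u v -> tail_bounded S u -> tail_bounded S v.
Proof.
move=> [N1 uv] [C [N2 uC]]; exists C, (maxn N1 N2) => n.
by rewrite geq_max => /andP[n1 n2] x Sx; rewrite -uv ?uC.
Qed.

Lemma tail_boundedD S u v :
  tail_bounded S u -> tail_bounded S v -> tail_bounded S (fun n x => u n x + v n x).
Proof.
move=> [C1 [N1 uC]] [C2 [N2 vC]]; exists (C1 + C2), (maxn N1 N2) => n.
by rewrite geq_max => /andP[n1 n2] x Sx; rewrite (le_trans (ler_normD _ _)) ?lerD ?uC ?vC.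
Qed.

Lemma tail_boundedM S u v :
  tail_bounded S u -> tail_bounded S v -> tail_bounded S (fun n x => u n x * v n x).
Proof.
move=> [C1 [N1 uC]] [C2 [N2 vC]]; exists (C1 * C2), (maxn N1 N2) => n.
by rewrite geq_max => /andP[n1 n2] x Sx; rewrite normrM ler_pM ?uC ?vC.
Qed.

Lemma tail_derivableD S u v : tail_derivable S u -> tail_derivable S v ->
  tail_derivable S (fun n x => u n x + v n x).
Proof.
move=> [N1 du] [N2 dv]; exists (maxn N1 N2) => n.
by rewrite geq_max => /andP[n1 n2] x Sx j; apply: derivableD; [apply: du|apply: dv].
Qed.

Lemma tail_derivableM S u v : tail_derivable S u -> tail_derivable S v ->
  tail_derivable S (fun n x => u n x * v n x).
Proof.
move=> [N1 du] [N2 dv]; exists (maxn N1 N2) => n.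
by rewrite geq_max => /andP[n1 n2] x Sx j; apply: derivableM; [apply: du|apply: dv].
Qed.

Lemma tail_bounded_partials_bounded S m u :
  tail_bounded_partials S m u -> tail_bounded S u.
Proof. by case: m => [|m] // []. Qed.

Lemma tail_bounded_partials_pred S m u :
  tail_bounded_partials S m.+1 u -> tail_bounded_partials S m u.
Proof.
elim: m u => [|m IH] u [ub ud up] //.
by split=> // j; apply: IH.
Qed.

Lemma tail_bounded_partials_iter S m u s : tail_bounded_partials S m u ->
  (size s <= m)%N -> tail_bounded S (fun n => iter_partial s (u n)).
Proof.
elim/last_ind: s m u => [|s j IH] m u um.
  by move=> _; apply: tail_bounded_partials_bounded um.
case: m um => [_|m [_ _ /(_ j) up]]; rewrite size_rcons // ltnS => sm.
have := IH _ _ up sm; apply: tail_bounded_eq; exists 0%N => n _ x _.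
by rewrite /iter_partial foldr_rcons.
Qed.

Variables (S : set 'rV[R]_d) (openS : open S).

Lemma tail_bounded_partials_eq m u v : tail_eq S u v ->
  tail_bounded_partials S m u -> tail_bounded_partials S m v.
Proof.
elim: m u v => [|m IH] u v uv; first exact: tail_bounded_eq.
have [N uvN] := uv.
have near_uv n x : (N <= n)%N -> S x -> \forall z \near x, u n z = v n z.
  by move=> Nn Sx; apply: filterS (openS Sx) => z Sz; rewrite uvN.
move=> [ub [N' ud] up]; split; first exact: tail_bounded_eq ub.
  exists (maxn N N') => n; rewrite geq_max => /andP[Nn N'n] x Sx j.
  exact: near_eq_derivable (near_uv n x Nn Sx) (ud n N'n x Sx j).
move=> j; apply: IH (up j); exists N => n Nn x Sx.
exact: near_eq_derive (near_uv n x Nn Sx).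
Qed.

Lemma tail_bounded_partials_cst m (c : R) :
  tail_bounded_partials S m (fun _ _ => c).
Proof.
elim: m c => [|m IH] c; first by exists `|c|, 0%N.
split; [by exists `|c|, 0%N | by exists 0%N => *; apply: derivable_cst|].
move=> j; apply: tail_bounded_partials_eq (IH 0); exists 0%N => n _ x _.
by rewrite /partial derive_cst.
Qed.

Lemma tail_bounded_partialsD m u v :
  tail_bounded_partials S m u -> tail_bounded_partials S m v ->
  tail_bounded_partials S m (fun n x => u n x + v n x).
Proof.
elim: m u v => [|m IH] u v; first exact: tail_boundedD.
move=> [ub ud up] [vb vd vp]; split; [exact: tail_boundedD|exact: tail_derivableD|].
move=> j; apply: tail_bounded_partials_eq (IH _ _ (up j) (vp j)).
have [N1 du] := ud; have [N2 dv] := vd.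
exists (maxn N1 N2) => n; rewrite geq_max => /andP[n1 n2] x Sx.
by rewrite /partial -deriveD //; [apply: du|apply: dv].
Qed.

Lemma tail_bounded_partialsM m u v :
  tail_bounded_partials S m u -> tail_bounded_partials S m v ->
  tail_bounded_partials S m (fun n x => u n x * v n x).
Proof.
elim: m u v => [|m IH] u v; first exact: tail_boundedM.
move=> um vm; have [ub ud up] := um; have [vb vd vp] := vm.
split; [exact: tail_boundedM|exact: tail_derivableM|].
move=> j; have := tail_bounded_partialsD (IH _ _ (tail_bounded_partials_pred um) (vp j))
  (IH _ _ (tail_bounded_partials_pred vm) (up j)).
apply: tail_bounded_partials_eq.
have [N1 du] := ud; have [N2 dv] := vd.
exists (maxn N1 N2) => n; rewrite geq_max => /andP[n1 n2] x Sx.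
by rewrite /partial [in RHS](deriveM (du _ n1 _ Sx j) (dv _ n2 _ Sx j)).
Qed.

Lemma tail_bounded_partials_sum m (I : Type) (r : seq I)
    (F : I -> nat -> 'rV[R]_d -> R) :
  (forall i, tail_bounded_partials S m (F i)) ->
  tail_bounded_partials S m (fun n x => \sum_(i <- r) F i n x).
Proof.
move=> Fm; elim: r => [|i r IHr].
  apply: tail_bounded_partials_eq (tail_bounded_partials_cst m 0).
  by exists 0%N => *; rewrite big_nil.
apply: tail_bounded_partials_eq (tail_bounded_partialsD (Fm i) IHr).
by exists 0%N => *; rewrite big_cons.
Qed.

Lemma tail_bounded_partials_expR m u :
  (exists N, forall n, (N <= n)%N -> forall x, S x -> u n x <= 0) -> tail_derivable S u ->
  (forall j, tail_bounded_partials S m (fun n => partial j (u n))) ->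
  tail_bounded_partials S m.+1 (fun n x => expR (u n x)).
Proof.
move=> [N0 u0] ud; have [N1 du] := ud.
have eb : tail_bounded S (fun n x => expR (u n x)).
  exists 1, N0 => n n0 x Sx.
  by rewrite ger0_norm ?expR_ge0 // expR_le1 u0.
have ed : tail_derivable S (fun n x => expR (u n x)).
  by exists N1 => n n1 x Sx j; have /@ex_derive := is_derive_expR_comp (du _ n1 _ Sx j).
have epartial j : tail_eq S (fun n x => expR (u n x) * partial j (u n) x)
    (fun n => partial j (fun x => expR (u n x))).
  exists N1 => n n1 x Sx.
  have := is_derive_expR_comp (du _ n1 _ Sx j).
  by rewrite /partial => /@derive_val ->.
elim: m => [|m IH] up; split=> // j; apply: tail_bounded_partials_eq (epartial j) _.
  exact: tail_boundedM eb (up j).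
apply: tail_bounded_partialsM (up j).
by apply: IH => i; apply: tail_bounded_partials_pred.
Qed.

End tail_bounds.

Section integral_bounds.
Context dT (T : measurableType dT) (R : realType) (mu : {measure set T -> \bar R}).
Local Open Scope ereal_scope.
Import HBNNSimple.

(* Unlike [integral_le_bound], no measurability of f is assumed: the integrands produced by
   [cint] are not known to be measurable. *)
Lemma ge0_integral_le_cst (D : set T) (f : T -> \bar R) (M : R) :
  measurable D -> (forall x, D x -> 0 <= f x <= M%:E) ->
  \int[mu]_(x in D) f x <= M%:E * mu D.
Proof.
move=> mD fM; have f0 x : D x -> 0 <= f x by move=> /fM /andP[].
rewrite ge0_integralE //; apply: ge_ereal_sup => _ [h /= hf <-].
have h0 x : ~ D x -> h x = 0%R.
  move=> Dx; apply/eqP; rewrite eq_le fun_ge0 andbT.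
  by have := hf x; rewrite patchE ifF ?lee_fin //; apply/negbTE/negP; rewrite inE.
have -> : sintegral mu h = \int[mu]_(x in D) (h x)%:E.
  rewrite -integralT_nnsfun [RHS]integral_mkcond; apply: eq_integral => x _.
  by rewrite patchE; case: ifPn => // xD; rewrite h0 //; move: xD; rewrite notin_setE.
rewrite -integral_cst //; apply: ge0_le_integral => //.
- by move=> x _; rewrite lee_fin fun_ge0.
- by apply/measurable_EFinP; apply: measurable_funTS; apply: measurable_funP.
- move=> x Dx; apply: le_trans (hf x) _.
  by rewrite patchE ifT ?inE //; have /andP[] := fM x Dx.
Qed.

Lemma normr_Rintegral_le_cst (D : set T) (g : T -> R) (M r : R) :
  measurable D -> mu D = r%:E -> (forall x, D x -> `|g x| <= M)%R ->
  (`|Rintegral mu D g| <= M * r)%R.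
Proof.
move=> mD muD gM.
have part_le (h : T -> \bar R) : (forall x, D x -> 0 <= h x <= M%:E) ->
    0 <= \int[mu]_(x in D) h x <= M%:E * mu D /\ \int[mu]_(x in D) h x \is a fin_num.
  move=> hM; have hle := ge0_integral_le_cst mD hM.
  have h0 : 0 <= \int[mu]_(x in D) h x by apply: integral_ge0 => x /hM /andP[].
  rewrite h0 hle ge0_fin_numE //; split => //; apply: le_lt_trans hle _.
  by rewrite muD -EFinM ltry.
have [|/andP[p0 pM] pfin] := part_le (EFin \o g)^\+.
  move=> x Dx; rewrite funepos_ge0 funeposE /= ge_max !lee_fin.
  by have := gM x Dx; rewrite ler_norml => /andP[? ?]; apply/andP; split; lra.
have [|/andP[n0 nM] nfin] := part_le (EFin \o g)^\-.
  move=> x Dx; rewrite funeneg_ge0 funenegE /= ge_max !lee_fin.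
  by have := gM x Dx; rewrite ler_norml => /andP[? ?]; apply/andP; split; lra.
rewrite /Rintegral integralE fineB // ler_norml.
move: p0 pM n0 nM; rewrite -(fineK pfin) -(fineK nfin).
rewrite muD -!EFinM !lee_fin.
by move=> *; apply/andP; split; lra.
Qed.

End integral_bounds.

Definition unit_box {R : realType} {d : nat} : set 'rV[R]_d :=
  [set y | forall i, - (1/2) <= y 0 i <= 1/2].

Section box_integrals.
Variables (R : realType) (d : nat).

Lemma lebesgue_measure_unit_itv :
  (@lebesgue_measure R) `[(- (1/2))%R, (1/2)%R]%classic = 1%E.
Proof.
rewrite lebesgue_measure_itv /= lte_fin ifT; last by lra.
by rewrite -EFinB; congr EFin; lra.
Qed.

Lemma unit_box0 : unit_box (0 : 'rV[R]_d).
Proof. by move=> i; rewrite mxE; apply/andP; split; lra. Qed.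

Lemma cint_bound s (f : 'rV[R]_d -> R) M :
  (forall y, unit_box y -> `|f y| <= M) -> forall x, unit_box x -> `|cint s f x| <= M.
Proof.
move=> fM; elim: s => [|j s IH] x bx /=; first exact: fM.
rewrite -[M]mulr1; apply: normr_Rintegral_le_cst => [||t jt].
- exact: measurable_itv.
- exact: lebesgue_measure_unit_itv.
apply: IH => k; rewrite /upd mxE; case: ifP => _; last exact: bx.
by move: jt; rewrite /= in_itv.
Qed.

End box_integrals.

Section zoom.
Variables (R : realType) (d : nat) (Phi : 'rV[R]_d -> R) (xs : 'rV[R]_d)
  (A : 'M[R]_d) (kap : R) (U : set 'rV[R]_d) (k : nat).
Hypotheses (Phi_ge0 : forall x, 0 <= Phi x) (kap_ge0 : 0 <= kap).
Hypotheses (oU : open U) (Uxs : U xs) (CkU : Ck k U Phi).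
Hypotheses (k_gt1 : (1 < k)%N) (d_lt_k : (d < k)%N).
Hypothesis grad0 : forall i, partial i Phi xs = 0.

(* The unit box is not open; derivatives are controlled on this open neighbourhood of it. *)
Let B : set 'rV[R]_d := ball 0 1.
Let B_open : open B. Proof. exact: ball_open. Qed.

(* With kap = 2 |ln tau| and A = D^(-1/2) Q^T, [zoom n] is h_n and [zoom_map n] is the map
   g_n of the statement, acting on row vectors. *)
Definition zoom n : R := Num.sqrt (kap / n%:R).
Definition zoom_map n x := xs + zoom n *: (x *m A).
Definition scaled_partial s n x :=
  n%:R * zoom n ^+ size s * iter_partial s Phi (zoom_map n x).

Lemma zoom_ge0 n : 0 <= zoom n.
Proof. exact: sqrtr_ge0. Qed.

Lemma mul_zoom_sqr n : (0 < n)%N -> n%:R * zoom n ^+ 2 = kap.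
Proof.
move=> n0; rewrite sqr_sqrtr ?divr_ge0 // mulrC divfK //.
by rewrite pnatr_eq0 -lt0n.
Qed.

Lemma zoom_small (eps : R) : 0 < eps -> exists N, forall n, (N <= n)%N -> zoom n <= eps.
Proof.
move=> e0; pose K := kap / eps ^+ 2.
have K0 : 0 <= K by rewrite divr_ge0 // exprn_ge0 // ltW.
exists (Num.bound K).+1 => n Nn.
have nK : K < n%:R.
  by apply: lt_le_trans (archi_boundP K0) _; rewrite ler_nat ltnW.
rewrite /zoom -(ger0_norm (ltW e0)) -sqrtr_sqr ler_sqrt ?exprn_ge0 ?ltW //.
have n0 : (0 < n)%N by apply: leq_trans Nn.
by rewrite ltr_pdivrMr ?ltr0n // mulrC -ltr_pdivrMr ?exprn_gt0.
Qed.

Lemma zoom_map_dist n x : B x -> `|zoom_map n x - xs| <= zoom n * (d%:R * `|A|).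
Proof.
move=> /mx_ball0 x1; rewrite addrC addKr normrZ ger0_norm ?zoom_ge0 //.
rewrite ler_wpM2l ?zoom_ge0 // (le_trans (mx_norm_mulmx_le _ _)) //.
by rewrite ler_wpM2l // -[X in _ <= X]mul1r ler_wpM2r // ltW.
Qed.

Lemma zoom_map_near (eps : R) : 0 < eps -> exists N, forall n, (N <= n)%N ->
  zoom n <= 1 /\ forall x, B x -> `|zoom_map n x - xs| < eps.
Proof.
move=> e0; pose cA := d%:R * `|A|.
have cA1 : 0 < cA + 1 by rewrite ltr_wpDl ?mulr_ge0.
have e1 : 0 < Order.min 1 (eps / (cA + 1)) by rewrite lt_min ltr01 divr_gt0.
have [N zN] := zoom_small e1.
exists N => n /zN; rewrite le_min => /andP[z1 ze]; split=> // x /(zoom_map_dist n) xd.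
apply: (le_lt_trans xd); apply: (le_lt_trans (y := eps / (cA + 1) * cA)).
  by rewrite ler_wpM2r ?mulr_ge0.
by rewrite mulrAC ltr_pdivrMr // ltr_pM2l // ltrDl.
Qed.

Lemma zoom_map_in_U : exists N, forall n, (N <= n)%N -> forall x, B x -> U (zoom_map n x).
Proof.
have [r r0 Ur] := open_mx_ball oU Uxs; have [N zN] := zoom_map_near r0.
by exists N => n Nn x x1; apply/Ur/(zN n Nn).2.
Qed.

Lemma is_derive_iter_partial z s : U z -> (size s < k)%N -> forall w,
  is_derive z w (iter_partial s Phi) (\sum_l w 0 l * iter_partial (l :: s) Phi z).
Proof.
move=> Uz sk w; apply: is_derive_partials => [|l]; last exact: (CkU (l :: s) Uz).2.
by apply: filterS (oU Uz) => z' Uz'; apply: (CkU s Uz').1.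
Qed.

Lemma partial_zoom s (c : R) n x j : U (zoom_map n x) -> (size s < k)%N ->
  derivable (fun y => c * iter_partial s Phi (zoom_map n y)) x (ev R j) /\
  partial j (fun y => c * iter_partial s Phi (zoom_map n y)) x =
    \sum_l c * zoom n * A j l * iter_partial (l :: s) Phi (zoom_map n x).
Proof.
move=> Ug sk; have [dPhi DPhi] := is_derive_iter_partial Ug sk (zoom n *: (ev R j *m A)).
have dg : derivable (fun y => iter_partial s Phi (zoom_map n y)) x (ev R j).
  exact/derivable_affine.
split; first exact: derivableZ dg.
rewrite /partial (deriveMl _ dg) derive_affine DPhi mulr_sumr.
by apply: eq_bigr => l _; rewrite mxE ev_mulmx; ring.
Qed.

Lemma iter_partial_near_bounded s : (size s <= k)%N ->
  \forall z \near xs, `|iter_partial s Phi z| <= `|iter_partial s Phi xs| + 1.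
Proof.
move=> sk; move: ((CkU s Uxs).2 sk).
move=> /(@cvgrPdist_le _ _ _ _ (nbhs_filter xs)) /(_ 1 ltr01).
apply: filterS => z z1; set a := iter_partial s Phi xs.
have -> : iter_partial s Phi z = a - (a - iter_partial s Phi z) by ring.
by rewrite (le_trans (ler_normB _ _)) // lerD2l.
Qed.

Lemma partial_lipschitz i : exists L rho, [/\ 0 < rho, 0 <= L &
  forall y, `|y - xs| < rho -> `|partial i Phi y| <= L * `|y - xs|].
Proof.
pose L := \sum_(l < d) (`|iter_partial [:: l; i] Phi xs| + 1).
have near_xs : \forall z \near xs, U z /\ forall l : 'I_d,
    `|iter_partial [:: l; i] Phi z| <= `|iter_partial [:: l; i] Phi xs| + 1.
  have near_bounded : \forall z \near xs, forall l : 'I_d,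
      `|iter_partial [:: l; i] Phi z| <= `|iter_partial [:: l; i] Phi xs| + 1.
    apply: (@filter_forall _ 'I_d (fun l z => `|iter_partial [:: l; i] Phi z| <=
      `|iter_partial [:: l; i] Phi xs| + 1) (nbhs xs) _) => l.
    exact: iter_partial_near_bounded.
  by apply: filterS2 (oU Uxs) near_bounded => z ? ?; split.
have [rho rho0 Hrho] := (nbhs_ballP _ _).1 near_xs.
have {}Hrho z : `|z - xs| < rho -> U z /\ forall l : 'I_d,
    `|iter_partial [:: l; i] Phi z| <= `|iter_partial [:: l; i] Phi xs| + 1.
  by move=> zxs; apply: Hrho; rewrite mx_norm_ball /ball_ /= distrC.
exists L, rho; split=> //; first by apply: sumr_ge0 => l _; rewrite addr_ge0.
move=> y yxs; pose w := y - xs.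
have on_segment (s : R) : `|s| <= `|1 : R| -> `|s *: w + xs - xs| < rho.
  move=> s1; rewrite addrK normrZ (le_lt_trans _ yxs) //.
  by rewrite -[X in _ <= X]mul1r ler_wpM2r // -(normr1 R).
have [c c1] := MVT_line (f := partial i Phi) (a := xs) (w := w) (b := 1)
  (fun s s1 => is_derive_iter_partial (s := [:: i]) (Hrho _ (on_segment s s1)).1 k_gt1 w).
rewrite scale1r /w subrK grad0 subr0 mulr1 => ->.
rewrite (le_trans (ler_norm_sum _ _ _)) // /L mulr_suml ler_sum // => l _.
rewrite normrM mulrC ler_pM ?mx_norm_ge_entry //.
exact: (Hrho _ (on_segment c c1)).2.
Qed.

Lemma scaled_gradient_tail_bounded i : tail_bounded B (scaled_partial [:: i]).
Proof.
have [L [rho [rho0 L0 HL]]] := partial_lipschitz i.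
have [N zN] := zoom_map_near rho0; pose cA := d%:R * `|A|.
exists (kap * L * cA), (maxn N 1) => n; rewrite geq_max => /andP[Nn n1] x x1.
have gx := zoom_map_dist n x1.
rewrite /scaled_partial /= expr1 normrM ger0_norm ?mulr_ge0 ?zoom_ge0 //.
apply: (le_trans (y := n%:R * zoom n * (L * (zoom n * cA)))).
  rewrite ler_wpM2l ?mulr_ge0 ?zoom_ge0 // (le_trans (HL _ ((zN n Nn).2 x x1))) //.
  by rewrite ler_wpM2l.
by rewrite -(mul_zoom_sqr n1) le_eqVlt; apply/orP; left; apply/eqP; ring.
Qed.

Lemma scaled_partial_tail_bounded s : (0 < size s <= d)%N ->
  tail_bounded B (scaled_partial s).
Proof.
case: s => [//|i [_|i2 s]]; first exact: scaled_gradient_tail_bounded.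
set s' := [:: i, i2 & s] => /andP[_ sd].
have s'k : (size s' <= k)%N := ltnW (leq_ltn_trans sd d_lt_k).
have [rho rho0 Hrho] := (nbhs_ballP _ _).1 (iter_partial_near_bounded s'k).
have [N zN] := zoom_map_near rho0.
exists (kap * (`|iter_partial s' Phi xs| + 1)), (maxn N 1) => n.
rewrite geq_max => /andP[Nn n1] x x1; have [z1 gx] := zN n Nn.
have bound : `|iter_partial s' Phi (zoom_map n x)| <= `|iter_partial s' Phi xs| + 1.
  by apply: Hrho; rewrite mx_norm_ball /ball_ /= distrC gx.
have zs : zoom n ^+ size s' <= zoom n ^+ 2.
  rewrite /= -addn2 exprD ler_piMl ?exprn_ge0 ?zoom_ge0 //.
  by rewrite exprn_ile1 ?zoom_ge0.
have zs0 : 0 <= zoom n ^+ size s' by rewrite exprn_ge0 ?zoom_ge0.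
rewrite /scaled_partial normrM ger0_norm; last exact: mulr_ge0 (ler0n _ _) zs0.
rewrite -(mul_zoom_sqr n1) ler_pM //; first exact: mulr_ge0 (ler0n _ _) zs0.
by rewrite ler_wpM2l.
Qed.

Lemma scaled_partial_tail_bounded_partials m s : (0 < size s)%N -> (size s + m <= d)%N ->
  tail_bounded_partials B m (scaled_partial s).
Proof.
elim: m s => [|m IH] s s0 smd.
  by apply: scaled_partial_tail_bounded; rewrite s0 -(addn0 (size s)).
have sd : (size s <= d)%N by apply: leq_trans smd; apply: leq_addr.
have sk : (size s < k)%N := leq_ltn_trans sd d_lt_k.
have [N gU] := zoom_map_in_U.
split; first by apply: scaled_partial_tail_bounded; rewrite s0.
  exists N => n Nn x x1 j.
  exact: (partial_zoom (n%:R * zoom n ^+ size s) j (gU n Nn x x1) sk).1.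
move=> j; have Hsum : tail_bounded_partials B m
    (fun n x => \sum_l A j l * scaled_partial (l :: s) n x).
  apply: (tail_bounded_partials_sum B_open) => l.
  have Wl : tail_bounded_partials B m (scaled_partial (l :: s)).
    by apply: IH; rewrite //= addSn -addnS.
  exact (tail_bounded_partialsM B_open (tail_bounded_partials_cst B_open m (A j l)) Wl).
apply: tail_bounded_partials_eq B_open _ _ _ _ Hsum.
exists N => n Nn x x1; rewrite /scaled_partial (partial_zoom _ _ (gU n Nn x x1) sk).2.
by apply: eq_bigr => l _ /=; rewrite exprSr; ring.
Qed.

Lemma exp_zoom_tail_bounded_partials m : (m <= d)%N ->
  tail_bounded_partials B m (fun n x => expR (- (n%:R * Phi (zoom_map n x)))).
Proof.
case: m => [_|m md].
  exists 1, 0%N => n _ x _.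
  by rewrite ger0_norm ?expR_ge0 // expR_le1 oppr_le0 mulr_ge0.
have [N gU] := zoom_map_in_U.
have s0 : (size ([::] : seq 'I_d) < k)%N by apply: leq_ltn_trans d_lt_k.
pose u n x := - n%:R * Phi (zoom_map n x).
have u_le0 : exists N, forall n, (N <= n)%N -> forall x, B x -> u n x <= 0.
  by exists 0%N => n _ x _; rewrite /u mulNr oppr_le0 mulr_ge0.
have ud : tail_derivable B u.
  by exists N => n Nn x x1 j; exact (partial_zoom (- n%:R) j (gU n Nn x x1) s0).1.
have up j : tail_bounded_partials B m (fun n => partial j (u n)).
  have Hsum : tail_bounded_partials B m
      (fun n x => \sum_l (- A j l) * scaled_partial [:: l] n x).
    apply: (tail_bounded_partials_sum B_open) => l.
    have Wl : tail_bounded_partials B m (scaled_partial [:: l]).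
      exact: scaled_partial_tail_bounded_partials.
    exact (tail_bounded_partialsM B_open (tail_bounded_partials_cst B_open m (- A j l)) Wl).
  apply: tail_bounded_partials_eq B_open _ _ _ _ Hsum.
  exists N => n Nn x x1; rewrite (partial_zoom _ _ (gU n Nn x x1) s0).2.
  by apply: eq_bigr => l _; rewrite /scaled_partial /= expr1; ring.
apply: tail_bounded_partials_eq B_open _ _ _ _ (tail_bounded_partials_expR B_open u_le0 ud up).
by exists 0%N => n _ x _; rewrite /u mulNr.
Qed.

Lemma unit_box_sub_ball : unit_box `<=` B.
Proof.
move=> y y_box; rewrite /B mx_norm_ball /ball_ /= sub0r normrN.
apply: (le_lt_trans (y := 1/2)); last lra.
by apply: mx_norm_le_entries => // i j; rewrite ord1 ler_norml.
Qed.

End zoom.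

Lemma gamma_norm_tail_bounded (R : realType) d (alpha : nat -> R) (beta : 'I_d -> R)
    (F : nat -> 'rV[R]_d -> R) :
  (forall k, 0 < alpha k) -> (forall j, 0 < beta j) ->
  (forall nu : {set 'I_d}, tail_bounded unit_box (fun n => iter_partial (enum nu) (F n))) ->
  exists C N, forall n, (N <= n)%N -> gamma_norm alpha beta (F n) <= C.
Proof.
move=> alpha_gt0 beta_gt0 FC.
have /choice [CN HCN] : forall nu : {set 'I_d}, exists CN : R * nat, forall n, (CN.2 <= n)%N ->
    forall y, unit_box y -> `|iter_partial (enum nu) (F n) y| <= `|CN.1|.
  move=> nu; have [C [N HC]] := FC nu; exists (C, N) => n Nn y y_box.
  exact: le_trans (HC n Nn y y_box) (ler_norm _).
pose w nu := (gammaw alpha beta nu)^-1.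
have w_ge0 nu : 0 <= w nu.
  by rewrite invr_ge0 ltW // mulr_gt0 // prodr_gt0.
exists (Num.sqrt (\sum_nu w nu * `|(CN nu).1| ^+ 2)), (\max_nu (CN nu).2)%N => n Nn.
rewrite /gamma_norm ler_sqrt; last by rewrite sumr_ge0 // => nu _; rewrite mulr_ge0.
apply: ler_sum => nu _; apply: ler_wpM2l; first exact: w_ge0.
have nuN : ((CN nu).2 <= n)%N by apply: leq_trans Nn; apply: (leq_bigmax nu).
have inner y : unit_box y ->
    `|cint (enum (~: nu)) (iter_partial (enum nu) (F n)) y| <= `|(CN nu).1|.
  exact/cint_bound/HCN.
apply: le_trans (ler_norm _) _; apply: cint_bound => [y /inner ?|]; last exact: unit_box0.
by rewrite normrX lerXn2r ?nnegrE.
Qed.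

Unset Implicit Arguments.

Theorem lemma5 (R : realType) (d : nat) (Phi : 'rV[R]_d -> R)
    (xs : 'rV[R]_d) (Q : 'M[R]_d) (lam : 'I_d -> R) (tau : R)
    (alpha : nat -> R) (beta : 'I_d -> R) :
  (forall x, 0 <= Phi x) ->
  (forall i, - (1/2) < xs 0 i < 1/2) ->
  (forall r : R, 0 < r -> exists c : R, 0 < c /\
     forall x : 'rV[R]_d, (forall i, - (1/2) <= x 0 i <= 1/2) ->
       r < enorm (x - xs) -> c <= Phi x - Phi xs) ->
  (exists U : set 'rV[R]_d, open U /\ U xs /\ Ck (4 * d + 3) U Phi) ->
  (forall v : 'rV[R]_d, v != 0 -> 0 < (v *m hessian Phi xs *m v^T) 0 0) ->
  Ck d setT Phi ->
  Q^T *m Q = 1%:M ->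
  (forall i, 0 < lam i) ->
  hessian Phi xs = Q *m diag_mx (\row_i lam i) *m Q^T ->
  0 < tau < 1 ->
  pod_weights alpha beta ->
  exists C : R, exists N : nat, forall n : nat, (N <= n)%N ->
    gamma_norm alpha beta
      (fun x : 'rV[R]_d =>
         expR (- (n%:R * Phi (xs + Num.sqrt (2 * `|ln tau| / n%:R) *:
                   (x *m diag_mx (\row_i (Num.sqrt (lam i))^-1) *m Q^T)))))
    <= C.
Proof.
move=> Phi_ge0 xs_in Phi_min [U [oU [Uxs CkU]]] _ _ _ _ _ _ [_ [_ [alpha_gt0 [beta_gt0 _]]]].
have k_gt1 : (1 < 4 * d + 3)%N by rewrite addn3.
have d_lt_k : (d < 4 * d + 3)%N by rewrite addn3 ltnS !leqW // leq_pmull.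
have grad0 := partial_eq0_at_isolated_min (ltnW k_gt1) oU Uxs CkU xs_in Phi_min.
have kap_ge0 : 0 <= 2 * `|ln tau| by rewrite mulr_ge0.
have := exp_zoom_tail_bounded_partials (diag_mx (\row_i (Num.sqrt (lam i))^-1) *m Q^T)
  Phi_ge0 kap_ge0 oU Uxs CkU k_gt1 d_lt_k grad0 (leqnn d).
move=> /tail_bounded_partials_iter Fbounded.
apply: gamma_norm_tail_bounded => // nu.
apply: tail_bounded_sub (@unit_box_sub_ball _ _) _.
have nu_le_d : (size (enum nu) <= d)%N.
  by rewrite -cardE -[X in (_ <= X)%N](card_ord d) max_card.
have := Fbounded (enum nu) nu_le_d.
apply: tail_bounded_eq; exists 0%N => n _ x _.
by congr iter_partial; apply/funext => y; rewrite /zoom_map /zoom mulmxA.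
Qed.
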